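(* Let $\alpha\in[0,1)$, $\sigma=\frac{1+\alpha}{2}$ (so $\rho:=\frac{1-\alpha}{1-\sigma}=2$), $\mu=\frac{8}{\sqrt{1-\alpha}}$, and let $\omega:\mathbb{R}_+\to(0,\infty)$ be non-decreasing. Let $(\lambda_k),(x_k),(y_k)$ be generated by the acceleration framework (context) up to $K$ for convex differentiable $g$ with minimizer $x^*$, with $\delta\le\frac{\|x^*\|}{\mu A_K}$ and $\lambda_k\ge\frac{1}{\rho\,\omega(\|y_k-\tilde x_{k-1}\|)}$ for all $k\in[K]$. Then for all $k\in[K]$ and all integers $J$ with $0<J<k/2$, \[ A_k\ge\min\left\{\frac{4^J}{\rho\,\omega(\mu\|x^*\|/4)},\ \frac{(k/J)^2}{16\rho\,\omega\!\left(\frac{4\mu\|x^*\|}{(k/J)^{3/2}}\right)}\right\}. \] Further, if $\|x^*\|\le R$ then $A_k\ge\frac{1}{2\omega(2\mu R)}$ for all $k\in[K]$.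
   Context: Acceleration framework: let $g:\mathbb{R}^d\to\mathbb{R}$ be convex and differentiable, $\sigma\in(0,1)$, $\delta\ge0$, $K\ge1$. Sequences $(\lambda_k)_{k=1}^K\subset(0,\infty)$ and $(x_k)_{k=0}^K,(y_k)_{k=0}^K\subset\mathbb{R}^d$ are generated by the framework if $x_0=y_0=0$, $A_0=0$, and for each $k=0,\dots,K-1$, with $a_{k+1}=\frac12\big[\lambda_{k+1}+\sqrt{\lambda_{k+1}^2+4\lambda_{k+1}A_k}\big]$, $A_{k+1}=A_k+a_{k+1}$, $\tilde x_k=\frac{A_k}{A_{k+1}}y_k+\frac{a_{k+1}}{A_{k+1}}x_k$, one has $\|\lambda_{k+1}\nabla g(y_{k+1})+y_{k+1}-\tilde x_k\|\le\sigma\|y_{k+1}-\tilde x_k\|+\lambda_{k+1}\delta$ and $\|x_{k+1}-(x_k-a_{k+1}\nabla g(y_{k+1}))\|\le a_{k+1}\delta$. (Note $\lambda_{k+1}A_{k+1}=a_{k+1}^2$.) *)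

From Stdlib Require Vectors.Fin.
From Stdlib Require Import Reals Lra.
Open Scope R_scope.

Definition vec (d : nat) : Type := Fin.t d -> R.

Fixpoint fsum (d : nat) : (Fin.t d -> R) -> R :=
  match d return (Fin.t d -> R) -> R with
  | O => fun _ => 0
  | S n => fun f => f Fin.F1 + fsum n (fun i => f (Fin.FS i))
  end.

Definition vzero {d} : vec d := fun _ => 0.
Definition vadd {d} (u v : vec d) : vec d := fun i => u i + v i.
Definition vsub {d} (u v : vec d) : vec d := fun i => u i - v i.
Definition vscal {d} (c : R) (v : vec d) : vec d := fun i => c * v i.
Definition inner {d} (u v : vec d) : R := fsum d (fun i => u i * v i).
Definition vnorm {d} (v : vec d) : R := sqrt (inner v v).

Definition convex_fun {d} (g : vec d -> R) : Prop :=
  forall (x y : vec d) (t : R), 0 <= t <= 1 ->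
    g (vadd (vscal t x) (vscal (1 - t) y)) <= t * g x + (1 - t) * g y.

Definition has_gradient {d} (g : vec d -> R) (G : vec d -> vec d) : Prop :=
  forall x : vec d, forall eps, 0 < eps -> exists delta, 0 < delta /\
    forall h : vec d, vnorm h < delta ->
      Rabs (g (vadd x h) - g x - inner (G x) h) <= eps * vnorm h.

Definition is_minimizer {d} (g : vec d -> R) (xs : vec d) : Prop :=
  forall x, g xs <= g x.

(* a_{k+1} given lambda_{k+1} and A_k *)
Definition a_next (l Ak : R) : R := (l + sqrt (l ^ 2 + 4 * l * Ak)) / 2.

(* A_k from the stepsizes lam (lam k = lambda_k, lam 0 unused) *)
Fixpoint Aseq (lam : nat -> R) (k : nat) : R :=
  match k with
  | O => 0
  | S n => Aseq lam n + a_next (lam (S n)) (Aseq lam n)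
  end.

Definition aseq (lam : nat -> R) (k : nat) : R := a_next (lam (S k)) (Aseq lam k).

Definition xtilde {d} (lam : nat -> R) (x y : nat -> vec d) (k : nat) : vec d :=
  vadd (vscal (Aseq lam k / Aseq lam (S k)) (y k))
       (vscal (aseq lam k / Aseq lam (S k)) (x k)).

Definition accel_framework {d} (g : vec d -> R) (G : vec d -> vec d)
    (sigma delta : R) (K : nat) (lam : nat -> R) (x y : nat -> vec d) : Prop :=
  (forall k, (1 <= k <= K)%nat -> 0 < lam k) /\
  x O = vzero /\ y O = vzero /\
  forall k, (k < K)%nat ->
    vnorm (vsub (vadd (vscal (lam (S k)) (G (y (S k)))) (y (S k))) (xtilde lam x y k))
      <= sigma * vnorm (vsub (y (S k)) (xtilde lam x y k)) + lam (S k) * delta /\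
    vnorm (vsub (x (S k)) (vsub (x k) (vscal (aseq lam k) (G (y (S k))))))
      <= aseq lam k * delta.

From Stdlib Require Import Reals Lra Psatz Lia FunctionalExtensionality.
Open Scope R_scope.

(* Write r_i = |y_i - xtilde_(i-1)| and T_i = A_i / lambda_i * r_i^2.  The proof
   has two independent halves.

   The Lyapunov function 2 A_k (g(y_k) - g(xs)) + |x_k - xs|^2
      decreases at each step by (1 - sigma^2)/2 * T_k, up to errors of order
      delta ([lyapunov_step], from the gradient inequality of a differentiable
      convex function and the two relative-error conditions of the framework).
      Summing, and keeping the iterates x_k in a ball around xs by a discrete
      bootstrap ([bootstrap_bound]), the condition delta <= |xs| / (mu A_K)
      gives  sum_i T_i <= (mu |xs|)^2 / 16  ([energy_bound]).

   This half only uses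
      a_k^2 = lambda_(k+1) A_(k+1), lambda_i >= 1 / (2 omega(r_i)) and the energy
      bound.  The first step gives A_1 = lambda_1 >= 1 / (2 omega(mu |xs| / 4)).
      For m = k / J and the threshold s = 4 mu |xs| / m^(3/2), a step with
      r_i <= s increases sqrt A by sqrt(1 / (2 omega s)) / 2, while a step with
      r_i > s increases ln A by 12/m minus its normalised energy; counting the
      two kinds of steps gives the two alternatives of the minimum
      ([growth_bound]).

   The theorem instantiates the second half with E = mu |xs|. *)


(* A pointwise linear relation between three coordinate families passes to
   their sums; every inner-product identity below is an instance of it. *)
Lemma fsum_lincomb d (F f1 f2 f3 : Fin.t d -> R) a b c :
  (forall i, F i = a * f1 i + b * f2 i + c * f3 i) ->
  fsum d F = a * fsum d f1 + b * fsum d f2 + c * fsum d f3.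
Proof.
  revert F f1 f2 f3; induction d as [|d IH]; intros F f1 f2 f3 H; simpl.
  - ring.
  - rewrite (IH (fun i => F (Fin.FS i)) (fun i => f1 (Fin.FS i))
                (fun i => f2 (Fin.FS i)) (fun i => f3 (Fin.FS i))).
    + rewrite H; ring.
    + intro i; apply H.
Qed.

Lemma fsum_nonneg d (f : Fin.t d -> R) : (forall i, 0 <= f i) -> 0 <= fsum d f.
Proof.
  revert f; induction d as [|d IH]; intros f H; simpl; [lra|].
  pose proof (H Fin.F1); pose proof (IH (fun i => f (Fin.FS i)) (fun i => H _)); lra.
Qed.

Lemma inner_nonneg d (v : vec d) : 0 <= inner v v.
Proof. unfold inner; apply fsum_nonneg; intro; nra. Qed.

Lemma vnorm_nonneg d (v : vec d) : 0 <= vnorm v.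
Proof. apply sqrt_pos. Qed.

Lemma vnorm_sq d (v : vec d) : vnorm v * vnorm v = inner v v.
Proof. apply sqrt_sqrt, inner_nonneg. Qed.

Lemma inner_sym d (u v : vec d) : inner u v = inner v u.
Proof.
  unfold inner; rewrite (fsum_lincomb d _ (fun i => v i * u i) u u 1 0 0); [ring|].
  intro; ring.
Qed.

Lemma inner_scal_r d (u h : vec d) t : inner u (vscal t h) = t * inner u h.
Proof.
  unfold inner; rewrite (fsum_lincomb d _ (fun i => u i * h i) u u t 0 0); [ring|].
  intro; unfold vscal; ring.
Qed.

Lemma vnorm_scal d t (h : vec d) : 0 <= t -> vnorm (vscal t h) = t * vnorm h.
Proof.
  intro Ht; unfold vnorm.
  assert (E : inner (vscal t h) (vscal t h) = (t * t) * inner h h).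
  { unfold inner; rewrite (fsum_lincomb d _ (fun i => h i * h i) h h (t * t) 0 0); [ring|].
    intro; unfold vscal; ring. }
  rewrite E, sqrt_mult by (nra || apply inner_nonneg).
  rewrite sqrt_square by exact Ht; reflexivity.
Qed.

Lemma vnorm_opp d (v : vec d) : vnorm (vsub vzero v) = vnorm v.
Proof.
  unfold vnorm, inner; f_equal.
  rewrite (fsum_lincomb d _ (fun i => v i * v i) v v 1 0 0); [ring|].
  intro; unfold vsub, vzero; ring.
Qed.

Lemma inner_expand d (e u w : vec d) s t : (forall i, e i = s * u i + t * w i) ->
  inner e e = s ^ 2 * inner u u + 2 * s * t * inner u w + t ^ 2 * inner w w.
Proof.
  intro H; unfold inner.
  apply fsum_lincomb; intro i; rewrite H; ring.
Qed.

(* A real p with 2tp <= t^2 a^2 + b^2 for every t > 0 satisfies p <= ab: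
   the discriminant form of the Cauchy-Schwarz argument. *)
Lemma le_mul_of_quadratic (p a b : R) :
  0 <= a -> 0 <= b -> (forall t, 0 < t -> 2 * t * p <= t ^ 2 * a ^ 2 + b ^ 2) ->
  p <= a * b.
Proof.
  intros Ha Hb H; destruct (Rle_dec p (a * b)) as [ok|nok]; [exact ok|exfalso].
  assert (Hp : 0 < p) by nra.
  destruct (Req_dec a 0) as [Ha0|Ha0].
  - specialize (H ((b ^ 2 + 1) / p) ltac:(apply Rdiv_lt_0_compat; nra)).
    replace (2 * ((b ^ 2 + 1) / p) * p) with (2 * (b ^ 2 + 1)) in H by (field; lra).
    subst a; nra.
  - assert (Ha2 : 0 < a ^ 2) by (apply pow_lt; lra).
    specialize (H (p / a ^ 2) ltac:(apply Rdiv_lt_0_compat; lra)).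
    replace (2 * (p / a ^ 2) * p) with (2 * (p ^ 2 / a ^ 2)) in H by (field; lra).
    replace ((p / a ^ 2) ^ 2 * a ^ 2) with (p ^ 2 / a ^ 2) in H by (field; lra).
    assert (Hq : p ^ 2 <= (a * b) ^ 2).
    { apply (Rmult_le_reg_r (/ a ^ 2)); [apply Rinv_0_lt_compat; lra|].
      replace ((a * b) ^ 2 * / a ^ 2) with (b ^ 2) by (field; lra).
      unfold Rdiv in H; lra. }
    assert (Hab : 0 <= a * b) by nra.
    assert (a * b * (a * b) < p * p) by (apply Rmult_le_0_lt_compat; lra).
    nra.
Qed.

Lemma cauchy_schwarz d (u v : vec d) : inner u v <= vnorm u * vnorm v.
Proof.
  apply le_mul_of_quadratic; try apply vnorm_nonneg.
  intros t _.
  assert (Hq := inner_nonneg d (fun i => t * u i - v i)).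
  unfold inner in Hq.
  rewrite (fsum_lincomb d _ (fun i => u i * u i) (fun i => u i * v i) (fun i => v i * v i)
             (t * t) (-2 * t) 1) in Hq by (intro; ring).
  unfold vnorm; rewrite !pow2_sqrt by apply inner_nonneg.
  fold (inner u u) (inner u v) (inner v v) in Hq; lra.
Qed.

(* Comparing the convexity chord
   along y + t (z - y) with the first-order expansion at y gives the claim in
   the limit t -> 0. *)
Lemma gradient_inequality d (g : vec d -> R) G : convex_fun g -> has_gradient g G ->
  forall y z, g y + inner (G y) (vsub z y) <= g z.
Proof.
  intros Hc Hg y z.
  set (h := vsub z y); set (I := inner (G y) h); set (N := vnorm h).
  destruct (Rle_dec (g y + I) (g z)) as [ok|nok]; [exact ok|exfalso].
  set (gap := g y + I - g z).
  assert (Hgap : gap > 0) by (unfold gap; lra).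
  assert (HN : 0 <= N) by apply vnorm_nonneg.
  set (e := gap / (2 * (N + 1))).
  assert (He : e * (2 * (N + 1)) = gap) by (unfold e; field; lra).
  destruct (Hg y e) as [dl [Hdl Hd]]; [unfold e; apply Rdiv_lt_0_compat; lra|].
  set (t := Rmin 1 (dl / (2 * (N + 1)))).
  assert (Ht0 : 0 < t) by (apply Rmin_glb_lt; [lra|apply Rdiv_lt_0_compat; lra]).
  assert (Ht1 : t <= 1) by apply Rmin_l.
  assert (HtN : t * N < dl).
  { assert (Ht2 : t * (2 * (N + 1)) <= dl).
    { assert (Hm := Rmin_r 1 (dl / (2 * (N + 1)))); fold t in Hm.
      apply (Rmult_le_compat_r (2 * (N + 1))) in Hm; [|lra].
      replace (dl / (2 * (N + 1)) * (2 * (N + 1))) with dl in Hm by (field; lra); lra. }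
    nra. }
  specialize (Hd (vscal t h)); rewrite vnorm_scal, inner_scal_r in Hd by lra.
  specialize (Hd HtN); fold I N in Hd.
  assert (Hexp := Rle_abs (- (g (vadd y (vscal t h)) - g y - t * I))).
  rewrite Rabs_Ropp in Hexp.
  assert (Hconv := Hc z y t (conj (Rlt_le _ _ Ht0) Ht1)).
  replace (vadd (vscal t z) (vscal (1 - t) y)) with (vadd y (vscal t h)) in Hconv
    by (apply functional_extensionality; intro i; unfold vadd, vscal, h, vsub; ring).
  assert (Hslope : I - e * N <= g z - g y).
  { apply (Rmult_le_reg_l t); [lra|]; nra. }
  assert (e * N < gap) by nra.
  unfold gap in *; lra.
Qed.
Fixpoint ssum (f : nat -> R) (n : nat) : R :=
  match n with O => 0 | S m => ssum f m + f (S m) end.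

Lemma ssum_le (f h : nat -> R) n :
  (forall i, (1 <= i <= n)%nat -> f i <= h i) -> ssum f n <= ssum h n.
Proof.
  induction n as [|n IH]; intro H; simpl; [lra|].
  assert (ssum f n <= ssum h n) by (apply IH; intros; apply H; lia).
  assert (f (S n) <= h (S n)) by (apply H; lia); lra.
Qed.

Lemma ssum_shift (f : nat -> R) n : ssum f (S n) = f 1%nat + ssum (fun j => f (S j)) n.
Proof. induction n as [|n IH]; [simpl; ring|]; cbn [ssum] in *; rewrite IH; ring. Qed.

Lemma ssum_scal (f : nat -> R) c n : ssum (fun i => c * f i) n = c * ssum f n.
Proof. induction n as [|n IH]; simpl; [ring|rewrite IH; ring]. Qed.

Lemma ssum_minus (f h : nat -> R) n : ssum (fun i => f i - h i) n = ssum f n - ssum h n.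
Proof. induction n as [|n IH]; simpl; [ring|rewrite IH; ring]. Qed.

Lemma ssum_mono (f : nat -> R) m n :
  (forall i, (1 <= i <= n)%nat -> 0 <= f i) -> (m <= n)%nat -> ssum f m <= ssum f n.
Proof.
  intros H Hmn; induction Hmn as [|n Hmn IH]; [lra|]; simpl.
  assert (ssum f m <= ssum f n) by (apply IH; intros; apply H; lia).
  specialize (H (S n) ltac:(lia)); lra.
Qed.

Lemma ssum_nonneg (f : nat -> R) n :
  (forall i, (1 <= i <= n)%nat -> 0 <= f i) -> 0 <= ssum f n.
Proof. intro H; apply (ssum_mono f 0 n H); lia. Qed.

Lemma ssum_telescope (h : nat -> R) n : ssum (fun j => h (S j) - h j) n = h (S n) - h 1%nat.
Proof. induction n as [|n IH]; simpl; [ring|rewrite IH; ring]. Qed.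

(* The recursion a = (l + sqrt (l^2 + 4 l A)) / 2 solves a^2 = l (A + a). *)
Lemma a_next_pos l A : 0 < l -> 0 <= A -> 0 < a_next l A.
Proof. intros; unfold a_next; pose proof (sqrt_pos (l ^ 2 + 4 * l * A)); lra. Qed.

Lemma a_next_sq l A : 0 < l -> 0 <= A -> a_next l A * a_next l A = l * (A + a_next l A).
Proof.
  intros Hl HA; unfold a_next.
  assert (E := sqrt_sqrt (l ^ 2 + 4 * l * A) ltac:(nra)).
  set (s := sqrt _) in *; nra.
Qed.

Lemma Aseq_S lam n : Aseq lam (S n) = Aseq lam n + aseq lam n.
Proof. reflexivity. Qed.

Lemma Aseq_one lam : 0 <= lam 1%nat -> Aseq lam 1 = lam 1%nat.
Proof.
  intro Hl; simpl; unfold a_next.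
  rewrite Rmult_0_r, Rplus_0_r, sqrt_pow2 by exact Hl; field.
Qed.

Lemma ssum_aseq lam n : ssum (fun i => aseq lam (i - 1)) n = Aseq lam n.
Proof.
  induction n as [|n IH]; simpl; [reflexivity|].
  rewrite IH; replace (n - 0)%nat with n by lia; reflexivity.
Qed.

Definition energy_term (lam r : nat -> R) (i : nat) : R := Aseq lam i / lam i * r i ^ 2.

Section Stepsizes.
Variables (lam : nat -> R) (K : nat).
Hypothesis lam_pos : forall k, (1 <= k <= K)%nat -> 0 < lam k.

Lemma Aseq_nonneg n : (n <= K)%nat -> 0 <= Aseq lam n.
Proof.
  induction n as [|n IH]; intro Hn; simpl; [lra|].
  assert (HA : 0 <= Aseq lam n) by (apply IH; lia).
  pose proof (a_next_pos (lam (S n)) (Aseq lam n) (lam_pos (S n) ltac:(lia)) HA); lra.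
Qed.

Lemma aseq_pos n : (n < K)%nat -> 0 < aseq lam n.
Proof. intro Hn; apply a_next_pos; [apply lam_pos; lia|apply Aseq_nonneg; lia]. Qed.

Lemma aseq_sq n : (n < K)%nat -> aseq lam n * aseq lam n = lam (S n) * Aseq lam (S n).
Proof. intro Hn; apply a_next_sq; [apply lam_pos; lia|apply Aseq_nonneg; lia]. Qed.

Lemma Aseq_pos n : (1 <= n <= K)%nat -> 0 < Aseq lam n.
Proof.
  intro Hn; destruct n as [|n]; [lia|]; rewrite Aseq_S.
  pose proof (Aseq_nonneg n ltac:(lia)); pose proof (aseq_pos n ltac:(lia)); lra.
Qed.

Lemma Aseq_mono m n : (m <= n <= K)%nat -> Aseq lam m <= Aseq lam n.
Proof.
  intros [Hmn HnK]; induction Hmn as [|n Hmn IH]; [lra|]; rewrite Aseq_S.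
  pose proof (aseq_pos n ltac:(lia)); assert (Aseq lam m <= Aseq lam n) by (apply IH; lia).
  lra.
Qed.

Lemma ssum_aseq_sq n : (n <= K)%nat -> ssum (fun i => aseq lam (i - 1) ^ 2) n <= Aseq lam n ^ 2.
Proof.
  induction n as [|n IH]; intro Hn; cbn [ssum]; [simpl; lra|].
  replace (S n - 1)%nat with n by lia; rewrite Aseq_S.
  assert (ssum (fun i => aseq lam (i - 1) ^ 2) n <= Aseq lam n ^ 2) by (apply IH; lia).
  pose proof (Aseq_nonneg n ltac:(lia)); pose proof (aseq_pos n ltac:(lia)); nra.
Qed.

Lemma energy_term_nonneg (r : nat -> R) i : (1 <= i <= K)%nat -> 0 <= energy_term lam r i.
Proof.
  intro Hi; unfold energy_term.
  apply Rmult_le_pos; [|apply pow2_ge_0].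
  apply Rmult_le_pos; [apply Aseq_nonneg; lia|].
  apply Rlt_le, Rinv_0_lt_compat, lam_pos; lia.
Qed.

End Stepsizes.

(* The relative-error condition |e| <= sigma r + l delta on the proximal
   residual e controls |e|^2 - r^2 by a negative multiple of r^2 plus an error
   of order (l delta)^2 (Young's inequality on the cross term). *)
Lemma relative_error_bound sigma l delta E r :
  0 <= sigma < 1 -> 0 <= l -> 0 <= delta -> 0 <= r -> 0 <= E ->
  E <= sigma * r + l * delta ->
  E ^ 2 - r ^ 2 <= - ((1 - sigma ^ 2) / 2) * r ^ 2
                   + (1 + 2 * sigma ^ 2 / (1 - sigma ^ 2)) * (l * l) * delta ^ 2.
Proof.
  intros Hs Hl Hd Hr HE H.
  set (c := 1 - sigma ^ 2).
  assert (Hc : 0 < c) by (unfold c; nra).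
  assert (Hsq : E ^ 2 <= (sigma * r + l * delta) ^ 2) by (apply pow_incr; lra).
  assert (Hyoung : 2 * sigma * r * (l * delta)
                   <= c / 2 * r ^ 2 + 2 * sigma ^ 2 / c * (l * delta) ^ 2).
  { apply (Rmult_le_reg_l c); [exact Hc|].
    replace (c * (c / 2 * r ^ 2 + 2 * sigma ^ 2 / c * (l * delta) ^ 2))
      with (c * c / 2 * r ^ 2 + 2 * sigma ^ 2 * (l * delta) ^ 2) by (field; lra).
    assert (0 <= (c * r - 2 * sigma * (l * delta)) ^ 2) by apply pow2_ge_0.
    nra. }
  unfold c in *; nra.
Qed.

Lemma inexact_step_distance d (x x' xs v : vec d) a delta :
  0 <= a -> vnorm (vsub x' (vsub x (vscal a v))) <= a * delta ->
  vnorm (vsub x' xs) ^ 2 <= vnorm (vsub x xs) ^ 2 - 2 * a * inner v (vsub x xs)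
                            + a ^ 2 * inner v v + 2 * a * delta * vnorm (vsub x' xs).
Proof.
  intros Ha H.
  set (f := vsub x' (vsub x (vscal a v))) in *.
  set (Q := vsub x' xs); set (P := vsub x xs).
  (* x - a v - xs, written once from Q and f, once from P and v *)
  assert (E1 := inner_expand d (fun i => Q i - f i) Q f 1 (-1)).
  specialize (E1 ltac:(intro; cbv beta; ring)).
  assert (E2 := inner_expand d (fun i => Q i - f i) P v 1 (- a)).
  specialize (E2 ltac:(intro; unfold Q, f, P, vsub, vscal; ring)).
  assert (CS := cauchy_schwarz d Q f).
  assert (Hff := inner_nonneg d f).
  assert (HQ := vnorm_nonneg d Q); assert (Hf := vnorm_nonneg d f).
  assert (HQf : vnorm Q * vnorm f <= vnorm Q * (a * delta)) by (apply Rmult_le_compat_l; lra).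
  rewrite (inner_sym d P v) in E2.
  replace (vnorm Q ^ 2) with (inner Q Q) by (rewrite <- vnorm_sq; ring).
  replace (vnorm P ^ 2) with (inner P P) by (rewrite <- vnorm_sq; ring).
  lra.
Qed.

(* Convexity inequality behind the accelerated scheme: with the extrapolated
   point xt = (A y + a x) / (A + a) and v = G y', the gradient inequality at y'
   towards y (weight A) and towards xs (weight a) combine into a bound on the
   progress of the weighted function values. *)
Lemma convexity_step d (g : vec d -> R) G (xs x y y' xt : vec d) A a :
  convex_fun g -> has_gradient g G -> 0 <= A -> 0 < a ->
  (forall i, xt i = A / (A + a) * y i + a / (A + a) * x i) ->
  (A + a) * (g y' - g xs) - A * (g y - g xs)
  <= (A + a) * inner (G y') (vsub y' xt) + a * inner (G y') (vsub x xs).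
Proof.
  intros Hc Hg HA Ha Hxt.
  set (v := G y').
  assert (Hy := gradient_inequality d g G Hc Hg y' y); fold v in Hy.
  assert (Hs := gradient_inequality d g G Hc Hg y' xs); fold v in Hs.
  assert (Hlin : inner v (vsub xs y')
                 = - (A + a) / a * inner v (vsub y' xt) + (-1) * inner v (vsub x xs)
                   + (- A / a) * inner v (vsub y y')).
  { unfold inner; apply fsum_lincomb; intro i; unfold vsub; rewrite Hxt; field; lra. }
  assert (Hscale : a * inner v (vsub xs y')
                   = - (A + a) * inner v (vsub y' xt) - a * inner v (vsub x xs)
                     - A * inner v (vsub y y')) by (rewrite Hlin; field; lra).
  nra.
Qed.

Definition residual {d} (lam : nat -> R) (x y : nat -> vec d) (k : nat) : R :=
  vnorm (vsub (y k) (xtilde lam x y (k - 1))).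

Definition lyapunov {d} (g : vec d -> R) (xs : vec d) (lam : nat -> R) (x y : nat -> vec d)
    (k : nat) : R :=
  2 * (Aseq lam k * (g (y k) - g xs)) + vnorm (vsub (x k) xs) ^ 2.

(* The proximal part of a step: for e = l v + w (v the gradient at the new
   point, w = y' - xt) satisfying the relative-error condition, the gradient
   terms produced by a step of size a with a^2 = l (A + a) are bounded by a
   negative multiple of the energy term (A + a) / l * |w|^2, up to delta. *)
Lemma proximal_step_bound d (v w e : vec d) sigma l delta A a :
  0 <= sigma < 1 -> 0 < l -> 0 <= delta -> a * a = l * (A + a) ->
  (forall i, e i = l * v i + w i) -> vnorm e <= sigma * vnorm w + l * delta ->
  2 * (A + a) * inner v w + a ^ 2 * inner v v
  <= - ((1 - sigma ^ 2) / 2) * ((A + a) / l * vnorm w ^ 2)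
     + (1 + 2 * sigma ^ 2 / (1 - sigma ^ 2)) * a ^ 2 * delta ^ 2.
Proof.
  intros Hs Hl Hd Ha2 He Herr.
  assert (Hprox := relative_error_bound sigma l delta (vnorm e) (vnorm w) Hs
                     ltac:(lra) Hd (vnorm_nonneg d w) (vnorm_nonneg d e) Herr).
  assert (Ie := inner_expand d e v w l 1 ltac:(intro i; rewrite He; ring)).
  set (c := 1 - sigma ^ 2) in *; set (C1 := 1 + 2 * sigma ^ 2 / c) in *.
  set (K1 := (A + a) / l).
  assert (HK1 : K1 * l = A + a) by (unfold K1; field; lra).
  assert (HK1p : 0 <= K1)
    by (unfold K1; apply Rmult_le_pos; [nra|apply Rlt_le, Rinv_0_lt_compat; lra]).
  assert (Hkey : 2 * (A + a) * inner v w + a ^ 2 * inner v v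
                 = K1 * (vnorm e ^ 2 - vnorm w ^ 2)).
  { replace (vnorm e ^ 2) with (inner e e) by (rewrite <- vnorm_sq; ring).
    replace (vnorm w ^ 2) with (inner w w) by (rewrite <- vnorm_sq; ring).
    replace (a ^ 2) with (K1 * l * l) by (rewrite HK1; lra).
    rewrite Ie, <- HK1; ring. }
  rewrite Hkey.
  replace (C1 * a ^ 2 * delta ^ 2) with (K1 * (C1 * (l * l) * delta ^ 2))
    by (replace (a ^ 2) with (a * a) by ring; rewrite Ha2, <- HK1; ring).
  replace (- (c / 2) * (K1 * vnorm w ^ 2)) with (K1 * (- (c / 2) * vnorm w ^ 2)) by ring.
  rewrite <- Rmult_plus_distr_l; apply Rmult_le_compat_l; lra.
Qed.

Lemma lyapunov_step d (g : vec d -> R) G xs sigma delta lam (x y : nat -> vec d) k :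
  convex_fun g -> has_gradient g G -> 0 <= sigma < 1 -> 0 <= delta ->
  0 < lam (S k) -> 0 <= Aseq lam k ->
  vnorm (vsub (vadd (vscal (lam (S k)) (G (y (S k)))) (y (S k))) (xtilde lam x y k))
    <= sigma * vnorm (vsub (y (S k)) (xtilde lam x y k)) + lam (S k) * delta ->
  vnorm (vsub (x (S k)) (vsub (x k) (vscal (aseq lam k) (G (y (S k))))))
    <= aseq lam k * delta ->
  lyapunov g xs lam x y (S k)
    + (1 - sigma ^ 2) / 2 * energy_term lam (residual lam x y) (S k)
  <= lyapunov g xs lam x y k
     + (1 + 2 * sigma ^ 2 / (1 - sigma ^ 2)) * aseq lam k ^ 2 * delta ^ 2
     + 2 * aseq lam k * delta * vnorm (vsub (x (S k)) xs).
Proof.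
  intros Hc Hg Hs Hd Hl HA He Hf.
  unfold lyapunov, energy_term, residual.
  replace (S k - 1)%nat with k by lia; rewrite Aseq_S.
  set (l := lam (S k)) in *; set (A := Aseq lam k) in *; set (a := aseq lam k) in *.
  set (v := G (y (S k))) in *; set (xt := xtilde lam x y k) in *.
  set (w := vsub (y (S k)) xt) in *.
  assert (Ha : 0 < a) by (apply a_next_pos; auto).
  assert (Hconv := convexity_step d g G xs (x k) (y k) (y (S k)) xt A a Hc Hg HA Ha
                     ltac:(intro; reflexivity)).
  assert (Hdist := inexact_step_distance d (x k) (x (S k)) xs v a delta ltac:(lra) Hf).
  assert (Hprox := proximal_step_bound d v w (vsub (vadd (vscal l v) (y (S k))) xt)
                     sigma l delta A a Hs Hl Hd (a_next_sq l A Hl HA)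
                     ltac:(intro; unfold w, vsub, vadd, vscal; ring) He).
  fold v w in Hconv; lra.
Qed.

(* By strong induction, the first violation D_m
   would dominate the weighted sum and force D_m^2 <= B + D_m X / 4. *)
Lemma bootstrap_bound (D a : nat -> R) n X B dl :
  (forall i, (1 <= i <= n)%nat -> 0 <= a i) -> (forall i, 0 <= D i) -> 0 <= X -> 0 <= dl ->
  dl * ssum a n <= X / 8 -> B <= 17 / 16 * X ^ 2 ->
  (forall m, (m <= n)%nat -> D m ^ 2 <= B + 2 * dl * ssum (fun i => a i * D i) m) ->
  forall m, (m <= n)%nat -> D m <= 6 / 5 * X.
Proof.
  intros Ha HD HX Hdl Hsum HB Hrec m; pattern m; apply Wf_nat.lt_wf_ind; clear m.
  intros m IH Hm.
  destruct (Rle_dec (D m) (6 / 5 * X)) as [ok|nok]; [exact ok|exfalso].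
  assert (Hdom : ssum (fun i => a i * D i) m <= ssum (fun i => D m * a i) m).
  { apply ssum_le; intros i Hi.
    destruct (Nat.eq_dec i m) as [->|Hne]; [right; ring|].
    assert (D i <= 6 / 5 * X) by (apply IH; lia).
    specialize (Ha i ltac:(lia)); nra. }
  rewrite ssum_scal in Hdom.
  assert (Hpart : dl * ssum a m <= X / 8).
  { pose proof (ssum_mono a m n Ha Hm); nra. }
  specialize (Hrec m Hm); specialize (HD m).
  assert (dl * ssum (fun i => a i * D i) m <= D m * (X / 8)) by nra.
  nra.
Qed.

Section LyapunovAnalysis.
Variables (d : nat) (g : vec d -> R) (G : vec d -> vec d) (xs : vec d).
Variables (sigma delta : R) (K : nat) (lam : nat -> R) (x y : nat -> vec d).
Hypotheses (g_convex : convex_fun g) (g_grad : has_gradient g G) (xs_min : is_minimizer g xs).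
Hypotheses (sigma_range : 0 <= sigma < 1) (delta_nonneg : 0 <= delta).
Hypothesis framework : accel_framework g G sigma delta K lam x y.

Let dist (i : nat) : R := vnorm (vsub (x i) xs).
Let c : R := 1 - sigma ^ 2.
Let C1 : R := 1 + 2 * sigma ^ 2 / c.

Lemma framework_lam_pos : forall k, (1 <= k <= K)%nat -> 0 < lam k.
Proof. apply framework. Qed.

(* Since xs minimises g, the Lyapunov function dominates |x_k - xs|^2. *)
Lemma lyapunov_lower k : (k <= K)%nat -> dist k ^ 2 <= lyapunov g xs lam x y k.
Proof.
  intro Hk; unfold lyapunov, dist.
  pose proof (Aseq_nonneg lam K framework_lam_pos k Hk); specialize (xs_min (y k)); nra.
Qed.

(* Summing the one-step inequality from x_0 = 0. *)
Lemma lyapunov_sum n : (n <= K)%nat ->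
  lyapunov g xs lam x y n + c / 2 * ssum (energy_term lam (residual lam x y)) n
  <= vnorm xs ^ 2 + C1 * delta ^ 2 * ssum (fun i => aseq lam (i - 1) ^ 2) n
     + 2 * delta * ssum (fun i => aseq lam (i - 1) * dist i) n.
Proof.
  destruct framework as [Hl [Hx0 [_ Hstep]]].
  induction n as [|n IH]; intro Hn.
  - unfold lyapunov; cbn [ssum Aseq]; rewrite Hx0, vnorm_opp; lra.
  - specialize (IH ltac:(lia)); destruct (Hstep n ltac:(lia)) as [He Hf].
    assert (H1 := lyapunov_step d g G xs sigma delta lam x y n g_convex g_grad sigma_range
                    delta_nonneg (Hl (S n) ltac:(lia)) (Aseq_nonneg lam K Hl n ltac:(lia)) He Hf).
    cbn [ssum]; replace (S n - 1)%nat with n by lia.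
    fold c C1 (dist (S n)) in H1; lra.
Qed.

Lemma error_sum_le n : (n <= K)%nat ->
  C1 * delta ^ 2 * ssum (fun i => aseq lam (i - 1) ^ 2) n <= C1 * (Aseq lam K * delta) ^ 2.
Proof.
  intro Hn; assert (Hl := framework_lam_pos).
  assert (HC1 : 0 <= C1).
  { unfold C1, c; assert (0 <= 2 * sigma ^ 2 / (1 - sigma ^ 2)); [|lra].
    apply Rmult_le_pos; [nra|apply Rlt_le, Rinv_0_lt_compat; nra]. }
  assert (H1 := ssum_aseq_sq lam K Hl n Hn).
  assert (H2 := Aseq_mono lam K Hl n K ltac:(lia)).
  assert (H3 := Aseq_nonneg lam K Hl n Hn).
  assert (ssum (fun i => aseq lam (i - 1) ^ 2) n <= Aseq lam K ^ 2) by nra.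
  assert (0 <= C1 * delta ^ 2) by nra; nra.
Qed.

Lemma distance_energy_bound n : (n <= K)%nat ->
  dist n ^ 2 + c / 2 * ssum (energy_term lam (residual lam x y)) n
  <= vnorm xs ^ 2 + C1 * (Aseq lam K * delta) ^ 2
     + 2 * delta * ssum (fun i => aseq lam (i - 1) * dist i) n.
Proof.
  intro Hn.
  pose proof (lyapunov_sum n Hn); pose proof (lyapunov_lower n Hn); pose proof (error_sum_le n Hn).
  lra.
Qed.

Lemma iterates_bounded :
  Aseq lam K * delta <= vnorm xs / 8 -> C1 * (Aseq lam K * delta) ^ 2 <= vnorm xs ^ 2 / 16 ->
  forall i, (i <= K)%nat -> dist i <= 6 / 5 * vnorm xs.
Proof.
  intros Hq HC1; assert (Hl := framework_lam_pos).
  apply (bootstrap_bound dist (fun i => aseq lam (i - 1)) K (vnorm xs)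
           (vnorm xs ^ 2 + C1 * (Aseq lam K * delta) ^ 2) delta).
  - intros i Hi; apply Rlt_le, (aseq_pos lam K Hl); lia.
  - intro; apply vnorm_nonneg.
  - apply vnorm_nonneg.
  - exact delta_nonneg.
  - rewrite ssum_aseq; lra.
  - lra.
  - intros m Hm; assert (H := distance_energy_bound m Hm).
    assert (0 <= c / 2 * ssum (energy_term lam (residual lam x y)) m).
    { apply Rmult_le_pos; [unfold c; nra|].
      apply ssum_nonneg; intros i Hi; apply (energy_term_nonneg lam K Hl); lia. }
    lra.
Qed.

Lemma energy_sum_bound :
  Aseq lam K * delta <= vnorm xs / 8 -> C1 * (Aseq lam K * delta) ^ 2 <= vnorm xs ^ 2 / 16 ->
  c / 2 * ssum (energy_term lam (residual lam x y)) K <= (1 + 1 / 16 + 3 / 10) * vnorm xs ^ 2.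
Proof.
  intros Hq HC1; assert (Hl := framework_lam_pos).
  assert (Hdist := iterates_bounded Hq HC1).
  set (X := vnorm xs) in *; set (q := Aseq lam K * delta) in *.
  assert (HX : 0 <= X) by apply vnorm_nonneg.
  (* the cross term is at most 2 delta (6/5) X A_K <= (3/10) X^2 *)
  assert (Hcross : ssum (fun i => aseq lam (i - 1) * dist i) K <= 6 / 5 * X * Aseq lam K).
  { rewrite <- ssum_aseq, <- ssum_scal; apply ssum_le; intros i Hi.
    pose proof (Hdist i ltac:(lia)); pose proof (aseq_pos lam K Hl (i - 1) ltac:(lia)); nra. }
  assert (2 * delta * ssum (fun i => aseq lam (i - 1) * dist i) K <= 2 * (6 / 5 * X) * q)
    by (unfold q; nra).
  assert (2 * (6 / 5 * X) * q <= 3 / 10 * X ^ 2) by nra.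
  assert (Hsum := distance_energy_bound K (le_n K)); fold X q in Hsum.
  assert (0 <= dist K ^ 2) by apply pow2_ge_0.
  lra.
Qed.

End LyapunovAnalysis.

(* With sigma = (1 + alpha)/2 and eta = 1 - alpha, the condition
   delta <= X / ((8 / sqrt eta) A) bounds q = A delta by sqrt(eta) X / 8,
   which meets both smallness requirements of energy_sum_bound since
   1 - sigma^2 >= 3 eta / 4. *)
Lemma inexactness_budget alpha A delta X :
  0 <= alpha < 1 -> 0 < A -> 0 <= delta -> 0 <= X ->
  delta <= X / ((8 / sqrt (1 - alpha)) * A) ->
  let sigma := (1 + alpha) / 2 in
  A * delta <= X / 8 /\ (1 + 2 * sigma ^ 2 / (1 - sigma ^ 2)) * (A * delta) ^ 2 <= X ^ 2 / 16.
Proof.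
  intros Ha HA Hd HX Hdelta sigma.
  set (eta := 1 - alpha) in *; set (q := A * delta).
  assert (Heta : 0 < eta <= 1) by (unfold eta; lra).
  assert (Hs2 := sqrt_sqrt eta ltac:(lra)); assert (Hs := sqrt_lt_R0 eta ltac:(lra)).
  assert (Hs1 : sqrt eta <= 1) by nra.
  assert (Hq0 : 0 <= q) by (unfold q; nra).
  assert (Hbud : q <= sqrt eta * X / 8).
  { unfold q; set (P := 8 / sqrt eta * A) in *.
    assert (HP : 0 < P) by (unfold P; apply Rmult_lt_0_compat; [apply Rdiv_lt_0_compat|]; lra).
    assert (H1 : delta * P <= X / P * P) by (apply Rmult_le_compat_r; lra).
    replace (X / P * P) with X in H1 by (field; lra).
    replace (A * delta) with (sqrt eta / 8 * (delta * P)) by (unfold P; field; lra).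
    apply (Rmult_le_compat_l (sqrt eta / 8)) in H1; lra. }
  assert (Hq2 : q ^ 2 <= eta * X ^ 2 / 64).
  { assert (q * q <= (sqrt eta * X / 8) * (sqrt eta * X / 8)) by (apply Rmult_le_compat; lra).
    nra. }
  assert (Hc : 3 * eta / 4 <= 1 - sigma ^ 2) by (unfold sigma, eta in *; nra).
  assert (Hsig : sigma ^ 2 <= 1) by (unfold sigma; nra).
  split; [nra|].
  assert (Hfrac : 2 * sigma ^ 2 / (1 - sigma ^ 2) * q ^ 2 <= X ^ 2 / 24).
  { apply (Rmult_le_reg_l (1 - sigma ^ 2)); [lra|].
    replace ((1 - sigma ^ 2) * (2 * sigma ^ 2 / (1 - sigma ^ 2) * q ^ 2))
      with (2 * sigma ^ 2 * q ^ 2) by (field; lra).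
    assert (0 <= q ^ 2) by apply pow2_ge_0; nra. }
  assert (eta * X ^ 2 <= X ^ 2) by nra.
  nra.
Qed.

Lemma energy_bound d alpha (g : vec d -> R) G xs delta K lam (x y : nat -> vec d) :
  0 <= alpha < 1 -> convex_fun g -> has_gradient g G -> is_minimizer g xs ->
  (1 <= K)%nat -> 0 <= delta ->
  accel_framework g G ((1 + alpha) / 2) delta K lam x y ->
  delta <= vnorm xs / ((8 / sqrt (1 - alpha)) * Aseq lam K) ->
  ssum (energy_term lam (residual lam x y)) K <= ((8 / sqrt (1 - alpha)) * vnorm xs) ^ 2 / 16.
Proof.
  intros Ha Hc Hg Hmin HK Hd Hfw Hdelta.
  assert (HX := vnorm_nonneg d xs).
  assert (Hl := framework_lam_pos _ _ _ _ _ _ _ _ _ Hfw).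
  assert (HAK : 0 < Aseq lam K) by (apply (Aseq_pos lam K Hl); lia).
  destruct (inexactness_budget alpha (Aseq lam K) delta (vnorm xs) Ha HAK Hd HX Hdelta)
    as [Hq HC1].
  assert (Hsum := energy_sum_bound d g G xs ((1 + alpha) / 2) delta K lam x y Hc Hg Hmin
                    ltac:(lra) Hd Hfw Hq HC1).
  assert (Hpos := ssum_nonneg _ K (energy_term_nonneg lam K Hl (residual lam x y))).
  set (T := ssum (energy_term lam (residual lam x y)) K) in *.
  set (eta := 1 - alpha) in *; set (X := vnorm xs) in *; set (sigma := (1 + alpha) / 2) in *.
  assert (Heta : 0 < eta <= 1) by (unfold eta; lra).
  assert (Hs2 := sqrt_sqrt eta ltac:(lra)); assert (Hs := sqrt_lt_R0 eta ltac:(lra)).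
  (* (1 - sigma^2)/2 >= 3 eta / 8, and (mu X)^2 / 16 = 4 X^2 / eta *)
  assert (Hc34 : 3 * eta / 8 * T <= (1 - sigma ^ 2) / 2 * T).
  { apply Rmult_le_compat_r; [exact Hpos|unfold sigma, eta; nra]. }
  replace ((8 / sqrt eta * X) ^ 2 / 16) with (4 * X ^ 2 / (sqrt eta * sqrt eta)) by (field; lra).
  rewrite Hs2; apply (Rmult_le_reg_l (3 * eta / 8)); [lra|].
  replace (3 * eta / 8 * (4 * X ^ 2 / eta)) with (3 / 2 * X ^ 2) by (field; lra).
  assert (0 <= X ^ 2) by apply pow2_ge_0.
  lra.
Qed.

Lemma sqrt_increment A a l : 0 <= A -> 0 < l -> 0 < a -> a * a = l * (A + a) ->
  sqrt l / 2 <= sqrt (A + a) - sqrt A.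
Proof.
  intros HA Hl Ha E.
  set (p := sqrt (A + a)); set (q := sqrt A).
  assert (Hp2 : p * p = A + a) by (apply sqrt_sqrt; lra).
  assert (Hq2 : q * q = A) by (apply sqrt_sqrt; lra).
  assert (Hq : 0 <= q) by apply sqrt_pos.
  assert (Hp : 0 < p) by (apply sqrt_lt_R0; lra).
  assert (Hsl : sqrt l * p = a).
  { unfold p; rewrite <- sqrt_mult, <- E by lra; apply sqrt_square; lra. }
  assert (Hpq : q <= p) by nra.
  assert (Hs : 0 <= sqrt l) by apply sqrt_pos.
  assert ((p - q) * (2 * p) >= sqrt l * p) by nra.
  nra.
Qed.

(* Growth of ln A along one step: ln (A + a) - ln A >= a / (A + a),
   from exp t >= 1 + t. *)
Lemma ln_increment A a : 0 < A -> 0 < a -> a / (A + a) <= ln (A + a) - ln A.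
Proof.
  intros HA Ha.
  assert (H := exp_ineq1_le (ln (A / (A + a)))).
  rewrite exp_ln in H by (apply Rdiv_lt_0_compat; lra).
  unfold Rdiv in H; rewrite ln_mult, ln_Rinv in H by (try apply Rinv_0_lt_compat; lra).
  assert (A / (A + a) = 1 - a / (A + a)) by (field; lra).
  lra.
Qed.

(* 4 <= e^2, iterated. *)
Lemma pow4_le_exp J : 4 ^ J <= exp (2 * INR J).
Proof.
  induction J as [|J IH]; [simpl; rewrite Rmult_0_r, exp_0; lra|].
  rewrite S_INR; replace (2 * (INR J + 1)) with (2 * INR J + (1 + 1)) by ring.
  rewrite !exp_plus; simpl.
  assert (H1 := exp_ineq1_le 1).
  assert (0 <= 4 ^ J) by (apply pow_le; lra).
  assert (0 < exp (2 * INR J)) by apply exp_pos.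
  assert (4 <= exp 1 * exp 1) by nra.
  nra.
Qed.

(* Tangent-line bound for the convex function p |-> 1/p^2 at p = 8/m:
   12/m - 256/(m^3 p^2) <= p for all p, m > 0. *)
Lemma inverse_square_tangent p m : 0 < p -> 0 < m -> 12 / m - 256 / (m ^ 3 * p ^ 2) <= p.
Proof.
  intros Hp Hm; set (u := m / 8).
  assert (Hu : 0 < u) by (unfold u; lra).
  replace (12 / m) with (3 / (2 * u)) by (unfold u; field; lra).
  replace (256 / (m ^ 3 * p ^ 2)) with (1 / (2 * u ^ 3 * p ^ 2)) by (unfold u; field; lra).
  assert (Hd : 0 < 2 * u ^ 3 * p ^ 2)
    by (apply Rmult_lt_0_compat; [apply Rmult_lt_0_compat|]; try apply pow_lt; lra).
  apply (Rmult_le_reg_l (2 * u ^ 3 * p ^ 2)); [exact Hd|].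
  replace (2 * u ^ 3 * p ^ 2 * (3 / (2 * u) - 1 / (2 * u ^ 3 * p ^ 2)))
    with (3 * u ^ 2 * p ^ 2 - 1) by (field; lra).
  assert (0 <= (u * p - 1) ^ 2 * (2 * u * p + 1)) by (apply Rmult_le_pos; [apply pow2_ge_0|nra]).
  nra.
Qed.

Fixpoint count (P : nat -> bool) (n : nat) : nat :=
  match n with O => O | S m => (count P m + if P (S m) then 1 else 0)%nat end.

Lemma count_compl P n : (count P n + count (fun j => negb (P j)) n)%nat = n.
Proof. induction n as [|n IH]; simpl; [reflexivity|]; destruct (P (S n)); simpl; lia. Qed.

Lemma ssum_indicator (P : nat -> bool) (c : R) n :
  ssum (fun j => if P j then c else 0) n = c * INR (count P n).
Proof.
  induction n as [|n IH]; simpl; [ring|].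
  rewrite IH, plus_INR; destruct (P (S n)); simpl; ring.
Qed.

(* The threshold s = 4E / m^(3/2) satisfies s^2 = 16 E^2 / m^3. *)
Lemma Rpower_three_halves m : 0 < m ->
  0 < Rpower m (3 / 2) /\ Rpower m (3 / 2) * Rpower m (3 / 2) = m ^ 3.
Proof.
  intro Hm; split; [unfold Rpower; apply exp_pos|].
  rewrite <- Rpower_plus; replace (3 / 2 + 3 / 2) with (INR 3) by (simpl; lra).
  apply Rpower_pow; exact Hm.
Qed.

(* Many small-residual steps: sqrt A >= (sqrt L / 2) G >= sqrt L m / 4. *)
Lemma growth_from_sqrt L A m G : 0 <= L -> 0 <= A -> 0 <= m -> m / 2 <= G ->
  sqrt L / 2 * G <= sqrt A -> L * m ^ 2 / 16 <= A.
Proof.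
  intros HL HA Hm0 HG H.
  assert (HsL := sqrt_pos L).
  assert (Hm : 0 <= sqrt L * m / 4 <= sqrt A) by (split; nra).
  assert (Hsq : (sqrt L * m / 4) * (sqrt L * m / 4) <= sqrt A * sqrt A)
    by (apply Rmult_le_compat; lra).
  rewrite sqrt_sqrt in Hsq by exact HA.
  replace (sqrt L * m / 4 * (sqrt L * m / 4)) with (sqrt L * sqrt L * m ^ 2 / 16) in Hsq by field.
  rewrite sqrt_sqrt in Hsq by exact HL; exact Hsq.
Qed.

(* Few small-residual steps (G < k / (2J)) leave at least k/3 large ones. *)
Lemma large_steps_count (k J G B : nat) :
  (G + B = k - 1)%nat -> (0 < J)%nat -> (2 * J < k)%nat -> INR G < INR k / INR J / 2 ->
  4 * INR J <= 12 / (INR k / INR J) * INR B.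
Proof.
  intros HGB HJ HJk HG.
  assert (HJr : 0 < INR J) by (apply lt_0_INR; lia).
  assert (Hkr : 0 < INR k) by (apply lt_0_INR; lia).
  assert (HGn : (2 * J * G < k)%nat).
  { apply INR_lt; rewrite !mult_INR; replace (INR 2) with 2 by reflexivity.
    apply (Rmult_lt_compat_l (2 * INR J)) in HG; [|lra].
    replace (2 * INR J * (INR k / INR J / 2)) with (INR k) in HG by (field; lra); lra. }
  assert (HB : (k <= 3 * B)%nat) by nia.
  apply le_INR in HB; rewrite mult_INR in HB; replace (INR 3) with 3 in HB by (simpl; lra).
  replace (12 / (INR k / INR J) * INR B) with (12 * INR J * INR B / INR k) by (field; lra).
  apply (Rmult_le_reg_r (INR k)); [exact Hkr|].
  replace (12 * INR J * INR B / INR k * INR k) with (4 * INR J * (3 * INR B)) by (field; lra).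
  apply Rmult_le_compat_l; lra.
Qed.

Lemma growth_from_log A1 Ak J : 0 < A1 -> 0 < Ak -> ln A1 + 2 * INR J <= ln Ak ->
  4 ^ J * A1 <= Ak.
Proof.
  intros H1 Hk H.
  assert (He : exp (ln A1 + 2 * INR J) <= exp (ln Ak)).
  { destruct H as [Hlt|Heq]; [apply Rlt_le, exp_increasing; exact Hlt|rewrite Heq; lra]. }
  rewrite exp_plus, !exp_ln in He by assumption.
  pose proof (pow4_le_exp J); nra.
Qed.

(* The test r_{j+1} <= s classifying step j -> j + 1 as a small-residual step. *)
Definition small_residual (r : nat -> R) (s : R) (j : nat) : bool :=
  if Rle_dec (r (S j)) s then true else false.

Section Growth.
Variables (lam r : nat -> R) (omega : R -> R) (n : nat) (E : R).
Hypothesis lam_pos : forall i, (1 <= i <= n)%nat -> 0 < lam i.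
Hypothesis omega_pos : forall t, 0 <= t -> 0 < omega t.
Hypothesis omega_mono : forall s t, 0 <= s <= t -> omega s <= omega t.
Hypothesis r_nonneg : forall i, 0 <= r i.
Hypothesis lam_large : forall i, (1 <= i <= n)%nat -> lam i >= 1 / (2 * omega (r i)).
Hypothesis E_nonneg : 0 <= E.
Hypothesis energy : ssum (energy_term lam r) n <= E ^ 2 / 16.

Lemma lam_lower i t : (1 <= i <= n)%nat -> r i <= t -> 1 / (2 * omega t) <= lam i.
Proof.
  intros Hi Hrt.
  assert (Hw := omega_pos (r i) (r_nonneg i)).
  assert (Hwt := omega_mono (r i) t (conj (r_nonneg i) Hrt)).
  specialize (lam_large i Hi).
  assert (1 / (2 * omega t) <= 1 / (2 * omega (r i))); [|lra].
  unfold Rdiv; rewrite !Rmult_1_l; apply Rinv_le_contravar; lra.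
Qed.

Lemma energy_partial k : (k <= n)%nat -> ssum (energy_term lam r) k <= E ^ 2 / 16.
Proof.
  intro Hk; eapply Rle_trans; [|exact energy].
  apply ssum_mono; [apply (energy_term_nonneg lam n lam_pos r)|exact Hk].
Qed.

(* The first residual is at most E/4, so A_k >= A_1 = lambda_1 >= 1/(2 omega(E/4)). *)
Lemma Aseq_lower_first z k : E / 4 <= z -> (1 <= k <= n)%nat -> 1 / (2 * omega z) <= Aseq lam k.
Proof.
  intros Hz Hk.
  assert (Hl1 := lam_pos 1%nat ltac:(lia)).
  assert (HA1 := Aseq_one lam (Rlt_le _ _ Hl1)).
  assert (Hr1 : r 1%nat <= E / 4).
  { assert (HT : energy_term lam r 1 = r 1%nat ^ 2)
      by (unfold energy_term; rewrite HA1; field; lra).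
    assert (H := energy_partial 1 ltac:(lia)); cbn [ssum] in H; rewrite HT in H.
    specialize (r_nonneg 1%nat); nra. }
  apply Rle_trans with (Aseq lam 1); [|apply (Aseq_mono lam n lam_pos); lia].
  rewrite HA1; apply lam_lower; [lia|lra].
Qed.

Lemma small_residual_step j s : (1 <= j)%nat -> (S j <= n)%nat -> 0 <= s -> r (S j) <= s ->
  sqrt (1 / (2 * omega s)) / 2 <= sqrt (Aseq lam (S j)) - sqrt (Aseq lam j).
Proof.
  intros Hj Hjn Hs Hrs.
  rewrite Aseq_S.
  assert (Hstep := sqrt_increment (Aseq lam j) (aseq lam j) (lam (S j))
                     (Aseq_nonneg lam n lam_pos j ltac:(lia)) (lam_pos (S j) ltac:(lia))
                     (aseq_pos lam n lam_pos j ltac:(lia))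
                     (aseq_sq lam n lam_pos j ltac:(lia))).
  assert (sqrt (1 / (2 * omega s)) <= sqrt (lam (S j)))
    by (apply sqrt_le_1_alt, lam_lower; [lia|exact Hrs]).
  lra.
Qed.

Lemma large_residual_step j s m : (1 <= j)%nat -> (S j <= n)%nat -> 0 < m -> 0 <= s ->
  s * s = 16 * E ^ 2 / m ^ 3 -> s < r (S j) ->
  12 / m - 16 / E ^ 2 * energy_term lam r (S j) <= ln (Aseq lam (S j)) - ln (Aseq lam j).
Proof.
  intros Hj Hjn Hm Hs Hs2 Hrs.
  set (A := Aseq lam j); set (a := aseq lam j); set (l := lam (S j)).
  assert (HA : 0 < A) by (apply (Aseq_pos lam n lam_pos); lia).
  assert (Ha : 0 < a) by (apply (aseq_pos lam n lam_pos); lia).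
  assert (Hl : 0 < l) by (apply lam_pos; lia).
  assert (Ha2 : a * a = l * (A + a)) by (apply (aseq_sq lam n lam_pos); lia).
  assert (HT : energy_term lam r (S j) = (A + a) / l * r (S j) ^ 2) by reflexivity.
  assert (HAl : 0 < (A + a) / l) by (apply Rdiv_lt_0_compat; lra).
  assert (Hr2 : s * s < r (S j) ^ 2) by nra.
  (* the energy term is positive, so E > 0 *)
  assert (HE : 0 < E ^ 2).
  { assert (H := energy_partial (S j) Hjn); cbn [ssum] in H.
    pose proof (ssum_nonneg _ j (fun i Hi => energy_term_nonneg lam n lam_pos r i ltac:(lia))).
    rewrite HT in H; assert (0 < (A + a) / l * r (S j) ^ 2) by nra; lra. }
  assert (HE0 : E <> 0) by (intro HE0; rewrite HE0 in HE; lra).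
  set (p := a / (A + a)).
  assert (Hp : 0 < p) by (unfold p; apply Rdiv_lt_0_compat; lra).
  assert (Hip : 1 / p ^ 2 = (A + a) / l).
  { replace (1 / p ^ 2) with ((A + a) * (A + a) / (a * a)) by (unfold p; field; lra).
    rewrite Ha2; field; lra. }
  assert (Hm3 : 0 < m ^ 3) by (apply pow_lt; lra).
  assert (Hcmp : 256 / (m ^ 3 * p ^ 2) <= 16 / E ^ 2 * energy_term lam r (S j)).
  { replace (256 / (m ^ 3 * p ^ 2)) with (16 / E ^ 2 * ((A + a) / l * (16 * E ^ 2 / m ^ 3)))
      by (rewrite <- Hip; field; repeat split; lra).
    rewrite HT, <- Hs2.
    apply Rmult_le_compat_l; [apply Rlt_le, Rdiv_lt_0_compat; lra|].
    apply Rmult_le_compat_l; lra. }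
  assert (Htan := inverse_square_tangent p m Hp Hm).
  assert (Hln := ln_increment A a HA Ha).
  fold p in Hln; rewrite Aseq_S; fold A a; lra.
Qed.

(* Normalisation factor of the energy terms (0 when E = 0). *)
Lemma inv_energy_nonneg : 0 <= 16 / E ^ 2.
Proof.
  destruct (Req_dec E 0) as [HE|HE].
  - rewrite HE; unfold Rdiv; replace (0 ^ 2) with 0 by ring; rewrite Rinv_0; lra.
  - apply Rlt_le, Rdiv_lt_0_compat; [lra|apply pow_lt]; nra.
Qed.

Lemma Aseq_step_pos j : (1 <= j)%nat -> (S j <= n)%nat ->
  0 < Aseq lam j /\ Aseq lam j <= Aseq lam (S j).
Proof.
  intros Hj Hjn; split; [apply (Aseq_pos lam n lam_pos); lia|].
  apply (Aseq_mono lam n lam_pos); lia.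
Qed.

Lemma sqrt_growth s k : 0 <= s -> (1 <= k <= n)%nat ->
  sqrt (1 / (2 * omega s)) / 2 * INR (count (small_residual r s) (k - 1)) <= sqrt (Aseq lam k).
Proof.
  intros Hs Hk.
  rewrite <- ssum_indicator.
  assert (H : ssum (fun j => if small_residual r s j then sqrt (1 / (2 * omega s)) / 2 else 0)
                   (k - 1)
              <= ssum (fun j => sqrt (Aseq lam (S j)) - sqrt (Aseq lam j)) (k - 1)).
  { apply ssum_le; intros j Hj; unfold small_residual.
    destruct (Rle_dec (r (S j)) s) as [Hrs|Hrs].
    - apply small_residual_step; auto; lia.
    - destruct (Aseq_step_pos j ltac:(lia) ltac:(lia)) as [_ Hle].
      apply sqrt_le_1_alt in Hle; lra. }
  rewrite (ssum_telescope (fun j => sqrt (Aseq lam j))) in H.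
  replace (S (k - 1)) with k in H by lia.
  pose proof (sqrt_pos (Aseq lam 1)); lra.
Qed.

Lemma normalised_energy_le_one k : (1 <= k <= n)%nat ->
  16 / E ^ 2 * ssum (fun j => energy_term lam r (S j)) (k - 1) <= 1.
Proof.
  intro Hk.
  assert (Hsh : ssum (fun j => energy_term lam r (S j)) (k - 1) <= ssum (energy_term lam r) k).
  { replace k with (S (k - 1)) at 2 by lia; rewrite ssum_shift.
    pose proof (energy_term_nonneg lam n lam_pos r 1 ltac:(lia)); lra. }
  pose proof (energy_partial k ltac:(lia)).
  destruct (Req_dec E 0) as [HE|HE].
  - rewrite HE; unfold Rdiv; replace (0 ^ 2) with 0 by ring; rewrite Rinv_0; lra.
  - apply Rle_trans with (16 / E ^ 2 * (E ^ 2 / 16)).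
    + apply Rmult_le_compat_l; [apply inv_energy_nonneg|lra].
    + right; field; lra.
Qed.

Lemma log_growth s m k : 0 < m -> 0 <= s -> s * s = 16 * E ^ 2 / m ^ 3 -> (1 <= k <= n)%nat ->
  12 / m * INR (count (fun j => negb (small_residual r s j)) (k - 1)) - 1
  <= ln (Aseq lam k) - ln (Aseq lam 1).
Proof.
  intros Hm Hs Hs2 Hk.
  rewrite <- ssum_indicator.
  assert (H : ssum (fun j => (if negb (small_residual r s j) then 12 / m else 0)
                             - 16 / E ^ 2 * energy_term lam r (S j)) (k - 1)
              <= ssum (fun j => ln (Aseq lam (S j)) - ln (Aseq lam j)) (k - 1)).
  { apply ssum_le; intros j Hj; unfold small_residual.
    destruct (Rle_dec (r (S j)) s) as [Hrs|Hrs]; cbn [negb].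
    - destruct (Aseq_step_pos j ltac:(lia) ltac:(lia)) as [Hpos Hle].
      assert (ln (Aseq lam j) <= ln (Aseq lam (S j))).
      { destruct Hle as [Hlt|Heq]; [apply Rlt_le, ln_increasing; lra|rewrite Heq; lra]. }
      assert (0 <= 16 / E ^ 2 * energy_term lam r (S j)).
      { apply Rmult_le_pos; [apply inv_energy_nonneg|].
        apply (energy_term_nonneg lam n lam_pos); lia. }
      lra.
    - apply (large_residual_step j s m); auto; try lia; lra. }
  rewrite (ssum_telescope (fun j => ln (Aseq lam j))), ssum_minus, ssum_scal in H.
  replace (S (k - 1)) with k in H by lia.
  pose proof (normalised_energy_le_one k Hk).
  lra.
Qed.

(* Theorem (growth of A_k): with m = k/J > 2 and threshold s = 4E/m^(3/2),
   either at least m/2 steps have small residual, giving A_k >= m^2 L / 16,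
   or at least k/3 steps have large residual, giving A_k >= 4^J A_1. *)
Lemma growth_bound k J : (1 <= k <= n)%nat -> (0 < J)%nat -> INR J < INR k / 2 ->
  Aseq lam k >= Rmin (4 ^ J / (2 * omega (E / 4)))
    ((INR k / INR J) ^ 2 / (16 * 2 * omega (4 * E / Rpower (INR k / INR J) (3 / 2)))).
Proof.
  intros Hk HJ HJk.
  assert (HJr : 0 < INR J) by (apply lt_0_INR; lia).
  set (m := INR k / INR J).
  assert (Hm : 2 < m) by (unfold m; apply (Rmult_lt_reg_r (INR J)); [lra|]; field_simplify; lra).
  destruct (Rpower_three_halves m ltac:(lra)) as [HP HP2].
  set (s := 4 * E / Rpower m (3 / 2)).
  assert (Hs : 0 <= s) by (apply Rmult_le_pos; [lra|apply Rlt_le, Rinv_0_lt_compat; lra]).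
  assert (Hs2 : s * s = 16 * E ^ 2 / m ^ 3) by (unfold s; rewrite <- HP2; field; lra).
  set (G := count (small_residual r s) (k - 1)).
  set (B := count (fun j => negb (small_residual r s j)) (k - 1)).
  assert (HGB : (G + B = k - 1)%nat) by apply count_compl.
  assert (Hsqrt := sqrt_growth s k Hs Hk); fold G in Hsqrt.
  assert (Hlog := log_growth s m k ltac:(lra) Hs Hs2 Hk); fold B in Hlog.
  assert (Hw : 0 < omega s) by (apply omega_pos; exact Hs).
  apply Rle_ge; destruct (Rle_dec (m / 2) (INR G)) as [Hmany|Hfew].
  - apply Rle_trans with (m ^ 2 / (16 * 2 * omega s)); [apply Rmin_r|].
    replace (m ^ 2 / (16 * 2 * omega s)) with (1 / (2 * omega s) * m ^ 2 / 16) by (field; lra).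
    apply (growth_from_sqrt _ _ m (INR G)); auto; try lra.
    + apply Rlt_le, Rdiv_lt_0_compat; lra.
    + apply (Aseq_nonneg lam n lam_pos); lia.
  - apply Rle_trans with (4 ^ J / (2 * omega (E / 4))); [apply Rmin_l|].
    assert (H2J : (2 * J < k)%nat).
    { apply INR_lt; rewrite mult_INR; replace (INR 2) with 2 by reflexivity; lra. }
    assert (Hcnt := large_steps_count k J G B HGB HJ H2J ltac:(fold m; lra)).
    assert (H1J : 1 <= INR J) by (replace 1 with (INR 1) by reflexivity; apply le_INR; lia).
    assert (H1 := Aseq_lower_first (E / 4) 1 (Rle_refl _) ltac:(lia)).
    assert (Hgrow := growth_from_log (Aseq lam 1) (Aseq lam k) J
                       (Aseq_pos lam n lam_pos 1 ltac:(lia)) (Aseq_pos lam n lam_pos k Hk)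
                       ltac:(fold m in Hcnt; lra)).
    replace (4 ^ J / (2 * omega (E / 4))) with (4 ^ J * (1 / (2 * omega (E / 4))))
      by (field; apply Rgt_not_eq, omega_pos; lra).
    pose proof (pow_le 4 J ltac:(lra)); nra.
Qed.

End Growth.

Theorem mainTheorem15 (d : nat) (alpha : R) (omega : R -> R)
  (g : vec d -> R) (G : vec d -> vec d) (xs : vec d)
  (delta : R) (K : nat) (lam : nat -> R) (x y : nat -> vec d) :
  0 <= alpha < 1 ->
  (forall t, 0 <= t -> 0 < omega t) ->
  (forall s t, 0 <= s <= t -> omega s <= omega t) ->
  convex_fun g -> has_gradient g G -> is_minimizer g xs ->
  (1 <= K)%nat -> 0 <= delta ->
  accel_framework g G ((1 + alpha) / 2) delta K lam x y ->
  delta <= vnorm xs / ((8 / sqrt (1 - alpha)) * Aseq lam K) ->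
  (forall k, (1 <= k <= K)%nat ->
     lam k >= 1 / (2 * omega (vnorm (vsub (y k) (xtilde lam x y (k - 1)%nat))))) ->
  (forall k J : nat, (1 <= k <= K)%nat -> (0 < J)%nat -> INR J < INR k / 2 ->
     Aseq lam k >=
       Rmin (4 ^ J / (2 * omega ((8 / sqrt (1 - alpha)) * vnorm xs / 4)))
            ((INR k / INR J) ^ 2 /
               (16 * 2 * omega (4 * (8 / sqrt (1 - alpha)) * vnorm xs
                                  / Rpower (INR k / INR J) (3 / 2))))) /\
  (forall Rb : R, vnorm xs <= Rb ->
     forall k, (1 <= k <= K)%nat ->
       Aseq lam k >= 1 / (2 * omega (2 * (8 / sqrt (1 - alpha)) * Rb))).
Proof.
  intros Ha Hom Hmono Hc Hg Hmin HK Hd Hfw Hdelta Hlam.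
  assert (Henergy := energy_bound d alpha g G xs delta K lam x y Ha Hc Hg Hmin HK Hd Hfw Hdelta).
  assert (Hl := framework_lam_pos _ _ _ _ _ _ _ _ _ Hfw).
  set (mu := 8 / sqrt (1 - alpha)) in *.
  assert (Hmu : 0 < mu) by (apply Rdiv_lt_0_compat; [lra|apply sqrt_lt_R0; lra]).
  assert (HE : 0 <= mu * vnorm xs) by (pose proof (vnorm_nonneg d xs); nra).
  assert (Hr := fun i => vnorm_nonneg d (vsub (y i) (xtilde lam x y (i - 1)))).
  split.
  - intros k J Hk HJ HJk.
    replace (4 * mu * vnorm xs) with (4 * (mu * vnorm xs)) by ring.
    exact (growth_bound lam (residual lam x y) omega K (mu * vnorm xs) Hl Hom Hmono Hr Hlam HE
             Henergy k J Hk HJ HJk).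
  - intros Rb HRb k Hk; apply Rle_ge.
    apply (Aseq_lower_first lam (residual lam x y) omega K (mu * vnorm xs) Hl Hom Hmono Hr Hlam
             HE Henergy); [nra|exact Hk].
Qed.
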